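(* Let $X$ be a finite connected poset, $F$ a field and $\varphi$ a Jordan automorphism of $I(X,F)$. Then there exist an invertible $\beta\in I(X,F)$ and a bijection $\lambda:X\to X$ such that $\varphi(e_x)=\beta e_{\lambda(x)}\beta^{-1}$ for all $x\in X$.
   Context: $I(X,F)$ is the incidence algebra of the locally finite poset $X$ over $F$ (functions $f:X\times X\to F$ vanishing unless $x\le y$, with product $(fg)(x,y)=\sum_{x\le z\le y}f(x,z)g(z,y)$). For $x\le y$, $e_{xy}$ is the function equal to $1$ at $(x,y)$ and $0$ elsewhere, and $e_x:=e_{xx}$. A poset is connected if any two elements are joined by a finite sequence of elements in which consecutive elements are comparable. A Jordan automorphism of an associative algebra $A$ is a bijective linear map $\varphi:A\to A$ with $\varphi(a^2)=\varphi(a)^2$ and $\varphi(aba)=\varphi(a)\varphi(b)\varphi(a)$ for all $a,b\in A$. *)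

From HB Require Import structures.
From mathcomp Require Import all_boot all_order all_algebra.
Set Implicit Arguments. Unset Strict Implicit. Unset Printing Implicit Defensive.
Import Order.TTheory GRing.Theory.
Local Open Scope ring_scope.
Local Open Scope order_scope.

Section Incidence.
Variables (d : Order.disp_t) (X : finPOrderType d) (F : fieldType).

Definition lex (a b : X) : bool := (a <= b)%O.

Definition is_inc (f : {ffun X * X -> F}) : bool :=
  [forall p : X * X, ~~ lex p.1 p.2 ==> (f p == 0%R)].

Record incidence := Inc { inc_val :> {ffun X * X -> F}; inc_valP : is_inc inc_val }.

HB.instance Definition _ := [isSub for inc_val].

Lemma is_incP (f : {ffun X * X -> F}) :
  (forall x y, ~~ lex x y -> f (x, y) = 0%R) -> is_inc f.
Proof. by move=> H; apply/forallP => -[x y]; apply/implyP => /= /H ->. Qed.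

Definition raw_mul (f g : incidence) : {ffun X * X -> F} :=
  [ffun p : X * X => \sum_(z : X | lex p.1 z && lex z p.2) f (p.1, z) * g (z, p.2)]%R.

Lemma raw_mulP f g : is_inc (raw_mul f g).
Proof.
apply: is_incP => x y nxy; rewrite ffunE /= big1 // => z /andP[xz zy].
by move: nxy; rewrite /lex (le_trans xz zy).
Qed.

Definition inc_mul (f g : incidence) : incidence := Inc (raw_mulP f g).

Lemma raw_addP (f g : incidence) : is_inc [ffun p : X * X => f p + g p]%R.
Proof.
apply: is_incP => x y nxy; rewrite ffunE.
by move/forallP: (inc_valP f) => /(_ (x, y)) /implyP /(_ nxy) /eqP ->;
   move/forallP: (inc_valP g) => /(_ (x, y)) /implyP /(_ nxy) /eqP ->; rewrite addr0.
Qed.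

Definition inc_add (f g : incidence) : incidence := Inc (raw_addP f g).

Lemma raw_scaleP (a : F) (f : incidence) : is_inc [ffun p : X * X => a * f p]%R.
Proof.
apply: is_incP => x y nxy; rewrite ffunE.
by move/forallP: (inc_valP f) => /(_ (x, y)) /implyP /(_ nxy) /eqP ->; rewrite mulr0.
Qed.

Definition inc_scale (a : F) (f : incidence) : incidence := Inc (raw_scaleP a f).

Lemma raw_oneP : is_inc [ffun p : X * X => ((p.1 == p.2)%:R : F)].
Proof.
apply: is_incP => x y nxy; rewrite ffunE /=.
by case: eqP nxy => // ->; rewrite /lex lexx.
Qed.

Definition inc_one : incidence := Inc raw_oneP.

Lemma raw_eP (x : X) : is_inc [ffun p : X * X => (((p.1 == x) && (p.2 == x))%:R : F)].
Proof.
apply: is_incP => a b nab; rewrite ffunE /=.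
by case: eqP nab => // ->; case: eqP => // ->; rewrite /lex lexx.
Qed.

Definition inc_e (x : X) : incidence := Inc (raw_eP x).

Definition jordan_automorphism (phi : incidence -> incidence) : Prop :=
  [/\ bijective phi,
      (forall (a : F) (f g : incidence),
          phi (inc_add (inc_scale a f) g) = inc_add (inc_scale a (phi f)) (phi g)),
      (forall f, phi (inc_mul f f) = inc_mul (phi f) (phi f)) &
      (forall f g, phi (inc_mul (inc_mul f g) f) = inc_mul (inc_mul (phi f) (phi g)) (phi f))].

End Incidence.

Definition poset_connected (d : Order.disp_t) (X : finPOrderType d) : Prop :=
  forall x y : X, connect (fun a b : X => (a <= b) || (b <= a)) x y.

(* Write e_x' := phi(e_x).  A Jordan map sends orthogonal idempotents to orthogonal
   idempotents: (e + f)^2 = e + f gives e'f' + f'e' = 0, and efe = 0 gives e'f'e' = 0,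
   so e'f' = e'(e'f' + f'e') - e'f'e' = 0.  Each e_x' is a nonzero idempotent, hence
   has a diagonal entry equal to 1, say at lambda(x); orthogonality makes lambda
   injective.  Then beta = sum_x e_x' e_lambda(x) and beta' = sum_x e_lambda(x) e_x'
   satisfy beta' beta = 1 and beta e_lambda(x) beta' = e_x' as soon as beta beta' = 1.
   The latter holds because in I(X,F) a one-sided inverse is two-sided: beta beta' is
   an idempotent with diagonal 1, and an idempotent with zero diagonal vanishes. *)

From HB Require Import structures.
From mathcomp Require Import all_boot all_order all_algebra.
Set Implicit Arguments. Unset Strict Implicit. Unset Printing Implicit Defensive.
Import Order.TTheory GRing.Theory.
Local Open Scope ring_scope.

Section OrthogonalIdempotents.
Variable R : pzRingType.

Definition orthogonal_idempotents (I : eqType) (f : I -> R) : Prop :=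
  forall i j, f i * f j = if i == j then f i else 0.

Lemma orthogonal_idempotents_mulr_sum (I : finType) (f h : I -> R) i :
  orthogonal_idempotents f -> f i * \sum_j f j * h j = f i * h i.
Proof.
move=> fo; rewrite mulr_sumr (bigD1 i) //= mulrA fo eqxx big1 ?addr0 // => j ji.
by rewrite mulrA fo eq_sym (negbTE ji) mul0r.
Qed.

Lemma orthogonal_idempotents_sum_mulr (I : finType) (f h : I -> R) i :
  orthogonal_idempotents f -> (\sum_j h j * f j) * f i = h i * f i.
Proof.
move=> fo; rewrite mulr_suml (bigD1 i) //= -mulrA fo eqxx big1 ?addr0 // => j ji.
by rewrite -mulrA fo (negbTE ji) mulr0.
Qed.

Section JordanMap.
Variable phi : R -> R.
Hypotheses (phiD : {morph phi : x y / x + y})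
  (phi_sqr : forall x, phi (x * x) = phi x * phi x)
  (phi_triple : forall x y, phi (x * y * x) = phi x * phi y * phi x).

Lemma jordan_map0 : phi 0 = 0.
Proof. by apply: (@addrI _ (phi 0)); rewrite -phiD !addr0. Qed.

Lemma jordan_map_orthogonal (e f : R) :
  e * e = e -> f * f = f -> e * f = 0 -> f * e = 0 -> phi e * phi f = 0.
Proof.
move=> ee ff ef fe.
have anticomm : phi e * phi f + phi f * phi e = 0.
  have := phi_sqr (e + f).
  rewrite phiD mulrDl !mulrDr ee ff ef fe addr0 add0r phiD.
  rewrite !mulrDl -!phi_sqr ee ff -addrA => /addrI.
  by rewrite addrA -{1}[phi f]add0r => /addIr /esym; rewrite addrC.
have efe : phi e * phi f * phi e = 0 by rewrite -phi_triple ef mul0r jordan_map0.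
have := congr1 (fun w => phi e * w) anticomm.
by rewrite mulrDr mulr0 !mulrA -phi_sqr ee efe addr0.
Qed.

Lemma jordan_map_orthogonal_idempotents (I : eqType) (e : I -> R) :
  orthogonal_idempotents e -> orthogonal_idempotents (phi \o e).
Proof.
move=> eo i j /=; case: eqVneq => [->|ij]; first by rewrite -phi_sqr eo eqxx.
have ji : j != i by rewrite eq_sym.
by apply: jordan_map_orthogonal; rewrite eo ?eqxx ?(negbTE ij) ?(negbTE ji).
Qed.

End JordanMap.

Section ConjugateIdempotents.
Variables (I : finType) (f g : I -> R).
Hypotheses (f_orth : orthogonal_idempotents f) (g_orth : orthogonal_idempotents g).
Hypotheses (gfg : forall i, g i * f i * g i = g i) (sum_g : \sum_i g i = 1).

Let beta := \sum_i f i * g i.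
Let beta' := \sum_i g i * f i.

Lemma conjugate_idempotents_mulVr : beta' * beta = 1.
Proof.
rewrite -sum_g mulr_suml; apply: eq_bigr => i _.
by rewrite -mulrA orthogonal_idempotents_mulr_sum // mulrA gfg.
Qed.

Lemma conjugate_idempotentsE : beta * beta' = 1 -> forall i, f i = beta * g i * beta'.
Proof.
move=> betaK i.
have gg : g i = g i * g i by rewrite g_orth eqxx.
transitivity (f i * beta * (beta' * f i)).
  by rewrite mulrA -(mulrA (f i)) betaK mulr1 f_orth eqxx.
rewrite [in RHS]gg [in RHS]mulrA -[in RHS]mulrA.
rewrite (orthogonal_idempotents_mulr_sum g) // (orthogonal_idempotents_sum_mulr g) //.
by rewrite (orthogonal_idempotents_mulr_sum f) // (orthogonal_idempotents_sum_mulr f).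
Qed.

End ConjugateIdempotents.
End OrthogonalIdempotents.

Section IncidenceRing.
Variables (d : Order.disp_t) (X : finPOrderType d) (F : fieldType).
Local Notation I := (incidence X F).

HB.instance Definition _ := [Equality of I by <:].
HB.instance Definition _ := [Choice of I by <:].

Lemma inc_ext (f g : I) : (forall x y, f (x, y) = g (x, y)) -> f = g.
Proof. by move=> fg; apply: val_inj; apply/ffunP => -[x y]; exact: fg. Qed.

Lemma inc_out (f : I) (x y : X) : ~~ (x <= y)%O -> f (x, y) = 0.
Proof.
by move=> nxy; move/forallP: (inc_valP f) => /(_ (x, y)) /implyP /(_ nxy) /eqP.
Qed.

Lemma inc_zeroP : is_inc [ffun _ : X * X => 0 : F].
Proof. by apply: is_incP => x y _; rewrite ffunE. Qed.

Definition inc_zero : I := Inc inc_zeroP.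

Lemma incDE (f g : I) x y : inc_add f g (x, y) = f (x, y) + g (x, y).
Proof. by rewrite ffunE. Qed.

Lemma incZE a (f : I) x y : inc_scale a f (x, y) = a * f (x, y).
Proof. by rewrite ffunE. Qed.

Lemma inc0E (x y : X) : inc_zero (x, y) = 0.
Proof. by rewrite ffunE. Qed.

Lemma inc1E (x y : X) : inc_one X F (x, y) = (x == y)%:R.
Proof. by rewrite ffunE. Qed.

Lemma inc_eE (z x y : X) : inc_e F z (x, y) = ((x == z) && (y == z))%:R.
Proof. by rewrite ffunE. Qed.

Lemma incME (f g : I) x y : inc_mul f g (x, y) = \sum_z f (x, z) * g (z, y).
Proof.
rewrite ffunE /= [RHS](bigID (fun z => lex x z && lex z y)) /=.
rewrite [X in _ = _ + X]big1 ?addr0 // => z; rewrite negb_and => /orP[] nle.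
  by rewrite inc_out ?mul0r.
by rewrite (inc_out g) ?mulr0.
Qed.

Lemma inc_scale1 (f : I) : inc_scale 1 f = f.
Proof. by apply: inc_ext => x y; rewrite incZE mul1r. Qed.

Lemma inc_addA : associative (@inc_add _ X F).
Proof. by move=> f g h; apply: inc_ext => x y; rewrite !incDE addrA. Qed.

Lemma inc_addC : commutative (@inc_add _ X F).
Proof. by move=> f g; apply: inc_ext => x y; rewrite !incDE addrC. Qed.

Lemma inc_add0 : left_id inc_zero (@inc_add _ X F).
Proof. by move=> f; apply: inc_ext => x y; rewrite incDE inc0E add0r. Qed.

Lemma inc_addN : left_inverse inc_zero (inc_scale (-1)) (@inc_add _ X F).
Proof.
by move=> f; apply: inc_ext => x y; rewrite incDE incZE inc0E mulN1r addNr.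
Qed.

HB.instance Definition _ := GRing.isZmodule.Build I inc_addA inc_addC inc_add0 inc_addN.

Lemma inc_mulA : associative (@inc_mul _ X F).
Proof.
move=> f g h; apply: inc_ext => x y; rewrite !incME.
under eq_bigr do rewrite incME big_distrr /=.
under [RHS]eq_bigr do rewrite incME big_distrl /=.
by rewrite exchange_big; apply: eq_bigr => z _; apply: eq_bigr => w _; rewrite mulrA.
Qed.

Lemma inc_mul1 : left_id (inc_one X F) (@inc_mul _ X F).
Proof.
move=> f; apply: inc_ext => x y; rewrite incME (big_only1 x) // => [|z zx _].
  by rewrite inc1E eqxx mul1r.
by rewrite inc1E eq_sym (negbTE zx) mul0r.
Qed.

Lemma inc_mulr1 : right_id (inc_one X F) (@inc_mul _ X F).
Proof.
move=> f; apply: inc_ext => x y; rewrite incME (big_only1 y) // => [|z zy _].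
  by rewrite inc1E eqxx mulr1.
by rewrite inc1E (negbTE zy) mulr0.
Qed.

Lemma inc_mulDl : left_distributive (@inc_mul _ X F) (@inc_add _ X F).
Proof.
move=> f g h; apply: inc_ext => x y; rewrite incDE !incME -big_split /=.
by apply: eq_bigr => z _; rewrite incDE mulrDl.
Qed.

Lemma inc_mulDr : right_distributive (@inc_mul _ X F) (@inc_add _ X F).
Proof.
move=> f g h; apply: inc_ext => x y; rewrite incDE !incME -big_split /=.
by apply: eq_bigr => z _; rewrite incDE mulrDr.
Qed.

HB.instance Definition _ :=
  GRing.Zmodule_isPzRing.Build I inc_mulA inc_mul1 inc_mulr1 inc_mulDl inc_mulDr.

Lemma inc_sumE (J : finType) (G : J -> I) x y : (\sum_j G j) (x, y) = \sum_j G j (x, y).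
Proof.
by apply: (big_morph (fun f : I => f (x, y))) => [f g|]; [exact: incDE | exact: inc0E].
Qed.

Lemma incM_diag (f g : I) x : (f * g) (x, x) = f (x, x) * g (x, x).
Proof.
rewrite [LHS]incME (big_only1 x) // => z zx _.
have [xz|nxz] := boolP (x <= z)%O; last by rewrite inc_out ?mul0r.
have [zx'|nzx] := boolP (z <= x)%O; last by rewrite (@inc_out g z x) ?mulr0.
by move: zx; rewrite (@le_anti _ _ z x) ?zx' ?xz ?eqxx.
Qed.

(* Induction on the size of the interval [x, y]: every middle term of
   g(x, y) = sum_z g(x, z) g(z, y) involves a diagonal entry or a smaller interval. *)
Lemma inc_idem_diag0 (g : I) : g * g = g -> (forall x, g (x, x) = 0) -> g = 0.
Proof.
move=> gg g0; apply: inc_ext => x y; rewrite inc0E.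
have [n] := ubnP #|[set w | (x <= w <= y)%O]|.
elim: n x y => [|n IHn] x y; first by rewrite ltn0.
rewrite ltnS => card_xy; have [xy|nxy] := boolP (x <= y)%O; last by rewrite inc_out.
rewrite -gg incME big1 // => z _.
have [->|zx] := eqVneq z x; first by rewrite g0 mul0r.
have [->|zy] := eqVneq z y; first by rewrite g0 mulr0.
have [xz|nxz] := boolP (x <= z)%O; last by rewrite inc_out ?mul0r.
have [zy'|nzy] := boolP (z <= y)%O; last by rewrite (@inc_out g z y) ?mulr0.
rewrite IHn ?mul0r //; apply: leq_trans card_xy; apply: proper_card.
apply/properP; split.
  by apply/subsetP => w; rewrite !inE => /andP[-> wz]; exact: le_trans wz zy'.
exists y; rewrite !inE ?xy ?lexx //=.
by apply: contra zy => yz; rewrite (@le_anti _ _ z y) ?zy' ?yz.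
Qed.

Lemma inc_idem_diag1 (g : I) : g * g = g -> g != 0 -> exists x, g (x, x) = 1.
Proof.
move=> gg /eqP gn0; have [x /eqP gx1|no1] := pickP (fun x => g (x, x) == 1).
  by exists x.
case: gn0; apply: inc_idem_diag0 => // x.
have : g (x, x) * (g (x, x) - 1) = 0 by rewrite mulrBr -incM_diag gg mulr1 subrr.
by move/eqP; rewrite mulf_eq0 subr_eq0 no1 orbF => /eqP.
Qed.

Lemma inc_mul1C (u v : I) : u * v = 1 -> v * u = 1.
Proof.
move=> uv.
have vu_idem : v * u * (v * u) = v * u by rewrite mulrA -(mulrA v) uv mulr1.
apply/eqP; rewrite eq_sym -subr_eq0; apply/eqP; apply: inc_idem_diag0.
  by rewrite mulrBl !mulrBr vu_idem !mulr1 !mul1r subrr subr0.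
move=> x; rewrite incDE incZE inc1E eqxx incM_diag [v (x, x) * _]mulrC -incM_diag.
by rewrite uv inc1E eqxx mulN1r subrr.
Qed.

Lemma inc_e_neq0 (x : X) : inc_e F x != 0.
Proof.
apply/eqP => /(congr1 (fun g : I => g (x, x))) /eqP.
by rewrite inc_eE inc0E eqxx oner_eq0.
Qed.

Lemma inc_e_orthogonal : orthogonal_idempotents (@inc_e _ X F).
Proof.
move=> a b; apply: inc_ext => x y; rewrite incME.
have [<-|ab] := eqVneq a b.
  rewrite (big_only1 a) // => [|z za _]; last first.
    by rewrite !inc_eE (negbTE za) andbF mul0r.
  by rewrite !inc_eE eqxx andbT; case: (x == a); case: (y == a); rewrite ?mulr0 ?mulr1.
rewrite inc0E big1 // => z _; rewrite !inc_eE.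
have [->|za] := eqVneq z a; last by rewrite andbF mul0r.
by rewrite (negbTE ab) mulr0.
Qed.

Lemma inc_e_sandwich (f : I) a :
  inc_e F a * f * inc_e F a = inc_scale (f (a, a)) (inc_e F a).
Proof.
apply: inc_ext => x y; rewrite incZE incME (big_only1 a) // => [|z za _]; last first.
  by rewrite inc_eE (negbTE za) mulr0.
rewrite incME (big_only1 a) // => [|z za _]; last first.
  by rewrite inc_eE (negbTE za) andbF mul0r.
rewrite !inc_eE eqxx !andbT.
by case: (x == a); case: (y == a); rewrite ?mulr0 ?mul0r ?mulr1 ?mul1r.
Qed.

Lemma sum_inc_e : \sum_x inc_e F x = 1 :> I.
Proof.
apply: inc_ext => x y; rewrite inc_sumE inc1E (big_only1 x) // => [|z zx _].
  by rewrite inc_eE eqxx eq_sym.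
by rewrite inc_eE eq_sym (negbTE zx).
Qed.

Lemma orthogonal_idempotents_diag_inj (f : X -> I) :
  orthogonal_idempotents f -> (forall x, f x != 0) ->
  exists2 mu : X -> X, injective mu & forall x, f x (mu x, mu x) = 1.
Proof.
move=> fo fn0.
have fdiag x : exists y, f x (y, y) == 1.
  have fxx : f x * f x = f x by rewrite fo eqxx.
  by have [y /eqP fy] := inc_idem_diag1 fxx (fn0 x); exists y.
pose mu x := xchoose (fdiag x).
have mu1 x : f x (mu x, mu x) = 1 by exact: eqP (xchooseP (fdiag x)).
exists mu => // a b mu_ab; apply/eqP; apply: contraTT isT => ab.
have := incM_diag (f a) (f b) (mu a).
by rewrite fo (negbTE ab) inc0E {3 4}mu_ab !mu1 mulr1 => /eqP; rewrite eq_sym oner_eq0.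
Qed.

Lemma orthogonal_idempotents_conj_inc_e (f : X -> I) :
  orthogonal_idempotents f -> (forall x, f x != 0) ->
  exists (beta beta' : I) (lambda : X -> X),
    [/\ beta * beta' = 1, beta' * beta = 1, bijective lambda &
        forall x, f x = beta * inc_e F (lambda x) * beta'].
Proof.
move=> fo fn0; have [mu mu_inj mu1] := orthogonal_idempotents_diag_inj fo fn0.
pose g x := inc_e F (mu x).
have go : orthogonal_idempotents g.
  by move=> a b; rewrite /g inc_e_orthogonal (inj_eq mu_inj).
have gfg x : g x * f x * g x = g x by rewrite inc_e_sandwich mu1 inc_scale1.
have sum_g : \sum_x g x = 1 by rewrite -sum_inc_e [RHS](reindex_inj mu_inj).
have betaVK := conjugate_idempotents_mulVr fo gfg sum_g.
have betaK := inc_mul1C betaVK.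
exists (\sum_x f x * g x), (\sum_x g x * f x), mu; split => //.
  exact: injF_bij.
exact: conjugate_idempotentsE fo go betaK.
Qed.

Lemma jordan_automorphism_inc_e (phi : I -> I) :
  jordan_automorphism phi ->
  exists (beta beta' : I) (lambda : X -> X),
    [/\ beta * beta' = 1, beta' * beta = 1, bijective lambda &
        forall x, phi (inc_e F x) = beta * inc_e F (lambda x) * beta'].
Proof.
move=> [phi_bij phi_lin phi_sqr phi_triple].
have phiD : {morph phi : f g / f + g}.
  by move=> f g; have := phi_lin 1 f g; rewrite !inc_scale1.
have f_orth := jordan_map_orthogonal_idempotents phiD phi_sqr phi_triple inc_e_orthogonal.
apply: orthogonal_idempotents_conj_inc_e f_orth _ => x /=.
by rewrite -(jordan_map0 phiD) (inj_eq (bij_inj phi_bij)) inc_e_neq0.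
Qed.

End IncidenceRing.

Theorem lemma4p1 (d : Order.disp_t) (X : finPOrderType d) (F : fieldType)
  (phi : incidence X F -> incidence X F) :
  poset_connected X ->
  jordan_automorphism phi ->
  exists (beta beta_inv : incidence X F) (lambda : X -> X),
    [/\ inc_mul beta beta_inv = inc_one X F,
        inc_mul beta_inv beta = inc_one X F,
        bijective lambda &
        forall x : X, phi (inc_e F x) = inc_mul (inc_mul beta (inc_e F (lambda x))) beta_inv].
Proof. by move=> _; exact: jordan_automorphism_inc_e. Qed.
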